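(* Let $V>0$, $G_o>0$, $\ell>0$ be constants and set $\rho=V/G_o$. Consider the system on $\{r>0\}$ $$\dot r = -V\cos\psi,\qquad \dot\psi=\Big[\frac1r-\frac1\rho\exp\!\Big(-\frac r\ell\Big)\Big]V\sin\psi .$$ If $\ell>\rho e$, the system has exactly four equilibria (with $\psi$ taken modulo $2\pi$), namely $(r^{*},\pm\pi/2)$ and $(r^{**},\pm\pi/2)$ with $$r^{*}=-\ell\,W_{-1}\!\Big(-\frac{\rho}{\ell}\Big),\qquad r^{**}=-\ell\,W_{0}\!\Big(-\frac{\rho}{\ell}\Big);$$ the linearization at $(r^{*},\pm\pi/2)$ has a pair of nonzero real eigenvalues of opposite sign (saddle type), while the linearization at $(r^{**},\pm\pi/2)$ has a pair of nonzero purely imaginary eigenvalues (center type). If $\ell<\rho e$, the system has no equilibria.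
   Context: This system models a nonholonomic mobile sensor moving at constant speed $V$ in a radially symmetric signal field $f(r,t)=2e^{-r/\ell}\cos(r-t)$ from a source at the origin, with turning gain proportional to the signal's spectral magnitude, $G=G_o e^{-r/\ell}$. Here $r$ is the distance from the source and $\psi$ is the angle between the direction from the sensor to the source and the sensor's heading. $W_0$ and $W_{-1}$ denote the principal and lower real branches of the Lambert W function on $[-1/e,0)$. *)

From Stdlib Require Import Reals ClassicalEpsilon.
From Coquelicot Require Import Coquelicot.
Open Scope R_scope.

Definition LambertW0 (y : R) : R :=
  epsilon (inhabits 0) (fun w => -1 <= w /\ w * exp w = y).
Definition LambertWm1 (y : R) : R :=
  epsilon (inhabits 0) (fun w => w <= -1 /\ w * exp w = y).

Definition rho (V Go : R) : R := V / Go.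
Definition fr (V : R) (r psi : R) : R := - V * cos psi.
Definition fpsi (V Go l : R) (r psi : R) : R :=
  (1 / r - 1 / rho V Go * exp (- r / l)) * V * sin psi.

Definition is_equilibrium (V Go l r psi : R) : Prop :=
  0 < r /\ fr V r psi = 0 /\ fpsi V Go l r psi = 0.

Definition jac11 (f : R -> R -> R) (r psi : R) := Derive (fun x => f x psi) r.
Definition jac12 (f : R -> R -> R) (r psi : R) := Derive (fun y => f r y) psi.

Definition is_eigenvalue2 (a b c d : R) (z : C) : Prop :=
  Cminus (Cmult (Cminus (RtoC a) z) (Cminus (RtoC d) z)) (Cmult (RtoC b) (RtoC c))
  = RtoC 0.

Definition lin_eigenvalue (V Go l r psi : R) (z : C) : Prop :=
  is_eigenvalue2
    (jac11 (fun x y => fr V x y) r psi) (jac12 (fun x y => fr V x y) r psi)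
    (jac11 (fpsi V Go l) r psi) (jac12 (fpsi V Go l) r psi) z.

Definition saddle_type (V Go l r psi : R) : Prop :=
  exists a b : R, a < 0 < b /\
    forall z : C, lin_eigenvalue V Go l r psi z <-> (z = RtoC a \/ z = RtoC b).

Definition center_type (V Go l r psi : R) : Prop :=
  exists w : R, 0 < w /\
    forall z : C, lin_eigenvalue V Go l r psi z <-> (z = (0, w) \/ z = (0, - w)).

(** The equilibria are the points with [cos psi = 0] and [r e^(-r/l) = rho].
    With [w = -r/l] the second condition reads [w e^w = -rho/l], and [w e^w]
    decreases on [(-oo,-1]], increases on [[-1,+oo)] and has minimum [-1/e];
    so there are two radii, one on each Lambert branch, when [rho/l < 1/e]
    and none when [rho/l > 1/e].  At an equilibrium the Jacobian is
    antidiagonal with determinant [-V^2 (r - l) / (r^2 l)], whose sign,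
    i.e. the side of [l] on which [r] lies ([r** < l < r*]), decides between
    a saddle and a center. *)

From Stdlib Require Import Reals Lra Psatz ClassicalEpsilon.
From Coquelicot Require Import Coquelicot.
Open Scope R_scope.

Definition xexp (w : R) : R := w * exp w.

Lemma derivable_pt_lim_xexp w : derivable_pt_lim xexp w ((w + 1) * exp w).
Proof. apply is_derive_Reals; unfold xexp; auto_derive; auto; ring. Qed.

Lemma continuity_xexp : continuity xexp.
Proof.
  intro w; apply derivable_continuous_pt.
  exists ((w + 1) * exp w); apply derivable_pt_lim_xexp.
Qed.

Lemma xexp_increasing a b : -1 <= a -> a < b -> xexp a < xexp b.
Proof.
  intros Ha Hab.
  destruct (MVT_cor2 xexp (fun w => (w + 1) * exp w) a b Hab) as [c [Hdiff Hc]].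
  { intros; apply derivable_pt_lim_xexp. }
  assert (0 < (c + 1) * exp c) by (apply Rmult_lt_0_compat; [lra | apply exp_pos]).
  nra.
Qed.

Lemma xexp_decreasing a b : b <= -1 -> a < b -> xexp b < xexp a.
Proof.
  intros Hb Hab.
  destruct (MVT_cor2 xexp (fun w => (w + 1) * exp w) a b Hab) as [c [Hdiff Hc]].
  { intros; apply derivable_pt_lim_xexp. }
  assert (0 < - (c + 1) * exp c) by (apply Rmult_lt_0_compat; [lra | apply exp_pos]).
  nra.
Qed.

Lemma xexp_m1 : xexp (-1) = - exp (-1).
Proof. unfold xexp; ring. Qed.

(* [exp (-1 - w) >= -w] is the tangent-line bound [exp x >= 1 + x]. *)
Lemma xexp_ge_m1 w : - exp (-1) <= xexp w.
Proof.
  unfold xexp.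
  replace (exp (-1)) with (exp (-1 - w) * exp w) by (rewrite <- exp_plus; f_equal; ring).
  pose proof (exp_ineq1_le (-1 - w)); pose proof (exp_pos w); nra.
Qed.

Lemma xexp_attains a b y : a <= b -> xexp a <= y <= xexp b \/ xexp b <= y <= xexp a ->
  exists w, a <= w <= b /\ xexp w = y.
Proof.
  intros Hab Hy.
  destruct (IVT_cor (fun w => xexp w - y) a b) as [w [Hw Hwy]]; auto.
  - apply continuity_minus; [apply continuity_xexp | apply continuity_const; now intros ? ?].
  - destruct Hy; nra.
  - exists w; split; auto; lra.
Qed.

(* [exp s > (1 + s/2)^2 > s^2/4], so [c e^s > s] at [s = 4/c]. *)
Lemma xexp_neg_tail c : 0 < c -> - c < xexp (- (4 / c)).
Proof.
  intros Hc; set (s := 4 / c).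
  assert (Hs : 0 < s) by (unfold s; apply Rdiv_lt_0_compat; lra).
  assert (Hhalf : 1 + s / 2 < exp (s / 2)) by (apply exp_ineq1; lra).
  assert (Hsq : s * s / 4 < exp s).
  { replace (exp s) with (exp (s / 2) * exp (s / 2)) by (rewrite <- exp_plus; f_equal; field).
    nra. }
  assert (Hcs : s < c * exp s).
  { replace s with (c * (s * s / 4)) at 1 by (unfold s; field; lra).
    apply Rmult_lt_compat_l; lra. }
  unfold xexp; rewrite exp_Ropp.
  pose proof (exp_pos s).
  apply (Rmult_lt_reg_r (exp s)); auto.
  replace (- s * / exp s * exp s) with (- s) by (field; lra); lra.
Qed.

Section LambertBranches.

Variable y : R.
Hypothesis Hy : - exp (-1) < y < 0.

Lemma LambertW0_spec : -1 <= LambertW0 y /\ xexp (LambertW0 y) = y.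
Proof.
  unfold LambertW0, xexp; apply epsilon_spec.
  destruct (xexp_attains (-1) 0 y) as [w [Hw Hwy]].
  - lra.
  - left; rewrite xexp_m1; unfold xexp; rewrite Rmult_0_l; lra.
  - exists w; split; [lra | exact Hwy].
Qed.

Lemma LambertWm1_spec : LambertWm1 y <= -1 /\ xexp (LambertWm1 y) = y.
Proof.
  unfold LambertWm1, xexp; apply epsilon_spec.
  assert (Hexp : exp (-1) < 1) by (rewrite <- exp_0; apply exp_increasing; lra).
  assert (Hinv : 1 < / - y) by (rewrite <- Rinv_1; apply Rinv_lt_contravar; lra).
  assert (H4 : 4 < 4 / - y) by (unfold Rdiv; lra).
  destruct (xexp_attains (- (4 / - y)) (-1) y) as [w [Hw Hwy]].
  - lra.
  - right; rewrite xexp_m1; pose proof (xexp_neg_tail (- y)); lra.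
  - exists w; split; [lra | exact Hwy].
Qed.

Lemma LambertW0_bounds : -1 < LambertW0 y < 0.
Proof.
  destruct LambertW0_spec as [Hw Hwy]; unfold xexp in Hwy.
  assert (LambertW0 y <> -1) by (intros E; rewrite E in Hwy; lra).
  pose proof (exp_pos (LambertW0 y)); split; nra.
Qed.

Lemma LambertWm1_lt_m1 : LambertWm1 y < -1.
Proof.
  destruct LambertWm1_spec as [Hw Hwy].
  assert (LambertWm1 y <> -1) by (intros E; rewrite E, xexp_m1 in Hwy; lra).
  lra.
Qed.

Lemma xexp_eq_iff_Lambert w : xexp w = y <-> w = LambertWm1 y \/ w = LambertW0 y.
Proof.
  destruct LambertWm1_spec as [Hm Hmy]; destruct LambertW0_spec as [H0 H0y].
  split; [| now intros [-> | ->]].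
  intros Hwy.
  destruct (Rle_or_lt w (-1)) as [Hw | Hw]; [left | right].
  - destruct (Rtotal_order w (LambertWm1 y)) as [Hlt | [Heq | Hgt]]; auto.
    + pose proof (xexp_decreasing _ _ Hm Hlt); lra.
    + pose proof (xexp_decreasing _ _ Hw Hgt); lra.
  - destruct (Rtotal_order w (LambertW0 y)) as [Hlt | [Heq | Hgt]]; auto.
    + pose proof (xexp_increasing _ _ (Rlt_le _ _ Hw) Hlt); lra.
    + pose proof (xexp_increasing _ _ H0 Hgt); lra.
Qed.

End LambertBranches.

Lemma rexp_eq_iff_xexp l a r : 0 < l ->
  r * exp (- r / l) = a <-> xexp (- r / l) = - a / l.
Proof.
  intros Hl; unfold xexp; split; intros E.
  - rewrite <- E; field; lra.
  - replace a with (- l * (- a / l)) by (field; lra).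
    rewrite <- E; field; lra.
Qed.

Lemma rexp_le l r : 0 < l -> r * exp (- r / l) <= l * exp (-1).
Proof.
  intros Hl; pose proof (xexp_ge_m1 (- r / l)) as Hmin; unfold xexp in Hmin.
  replace (r * exp (- r / l)) with (- l * (- r / l * exp (- r / l))) by (field; lra).
  nra.
Qed.

Lemma exp_m1_mul_exp_1 : exp (-1) * exp 1 = 1.
Proof. rewrite <- exp_plus; replace (-1 + 1) with 0 by ring; apply exp_0. Qed.

Lemma Lambert_domain l a : 0 < l -> 0 < a -> a * exp 1 < l -> - exp (-1) < - a / l < 0.
Proof.
  intros Hl Ha Hal.
  pose proof exp_m1_mul_exp_1.
  assert (0 < a / l) by (apply Rdiv_lt_0_compat; auto).
  assert (a / l < exp (-1)).
  { apply (Rmult_lt_reg_r (l * exp 1)); [apply Rmult_lt_0_compat; auto; apply exp_pos |].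
    replace (a / l * (l * exp 1)) with (a * exp 1) by (field; lra). nra. }
  unfold Rdiv in *; lra.
Qed.

Lemma rexp_eq_iff_Lambert l a r : 0 < l -> - exp (-1) < - a / l < 0 ->
  r * exp (- r / l) = a <->
  r = - l * LambertWm1 (- a / l) \/ r = - l * LambertW0 (- a / l).
Proof.
  intros Hl Hy.
  rewrite rexp_eq_iff_xexp, (xexp_eq_iff_Lambert _ Hy) by auto.
  split; intros [E | E]; [left | right | left | right].
  1, 2: rewrite <- E; field; lra.
  all: rewrite E; field; lra.
Qed.

Lemma rho_pos V Go : 0 < V -> 0 < Go -> 0 < rho V Go.
Proof. intros; unfold rho; apply Rdiv_lt_0_compat; auto. Qed.

Lemma sin_sqr_of_cos_0 psi : cos psi = 0 -> sin psi * sin psi = 1.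
Proof. intros Hc; pose proof (sin2_cos2 psi) as H; unfold Rsqr in H; nra. Qed.

Lemma cos_eq_0_iff psi : - PI < psi <= PI ->
  cos psi = 0 <-> psi = PI / 2 \/ psi = - (PI / 2).
Proof.
  intros Hpsi; split.
  - intros Hc; destruct (cos_eq_0_0 _ Hc) as [k Hk]; pose proof PI_RGT_0.
    assert (Hlo : -2 < IZR k) by (apply (Rmult_lt_reg_r PI); nra).
    assert (Hhi : IZR k < 1) by (apply (Rmult_lt_reg_r PI); nra).
    apply lt_IZR in Hlo, Hhi.
    assert (k = 0 \/ k = -1)%Z as [-> | ->] by lia; [left | right]; rewrite Hk; simpl; lra.
  - intros [-> | ->]; [| rewrite cos_neg]; apply cos_PI2.
Qed.

Lemma turning_rate_eq_0_iff r a E : 0 < r -> 0 < a ->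
  1 / r - 1 / a * E = 0 <-> r * E = a.
Proof.
  intros Hr Ha.
  replace (1 / r - 1 / a * E) with ((a - r * E) / (r * a)) by (field; lra).
  split; intros H.
  - enough (a - r * E = 0) by lra.
    replace (a - r * E) with ((a - r * E) / (r * a) * (r * a)) by (field; lra).
    rewrite H; ring.
  - replace (a - r * E) with 0 by lra; unfold Rdiv; ring.
Qed.

Lemma is_equilibrium_iff V Go l r psi : 0 < V -> 0 < Go ->
  is_equilibrium V Go l r psi <->
  0 < r /\ cos psi = 0 /\ r * exp (- r / l) = rho V Go.
Proof.
  intros HV HG; pose proof (rho_pos V Go HV HG) as Hrho.
  unfold is_equilibrium, fr, fpsi.
  split; intros [Hr [Hc He]]; split; auto.
  - assert (Hcos : cos psi = 0) by nra.
    assert (Hsin : sin psi <> 0) by (pose proof (sin_sqr_of_cos_0 _ Hcos); nra).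
    split; auto.
    apply turning_rate_eq_0_iff; auto.
    destruct (Rmult_integral _ _ He) as [H | H]; [| contradiction].
    destruct (Rmult_integral _ _ H); auto; lra.
  - rewrite Hc; split; [ring |].
    apply (turning_rate_eq_0_iff r (rho V Go)) in He; auto.
    rewrite He; ring.
Qed.

Lemma is_eigenvalue2_antidiag b c z : is_eigenvalue2 0 b c 0 z <->
  fst z * fst z - snd z * snd z = b * c /\ fst z * snd z = 0.
Proof.
  destruct z as [x y]; unfold is_eigenvalue2, Cminus, Cplus, Copp, Cmult, RtoC; simpl.
  split.
  - intros H; injection H as H1 H2; split; nra.
  - intros [H1 H2]; f_equal; nra.
Qed.

Lemma antidiag_eigenvalues_real b c : 0 < b * c ->
  exists a a', a < 0 < a' /\
    forall z, is_eigenvalue2 0 b c 0 z <-> z = RtoC a \/ z = RtoC a'.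
Proof.
  intros Hbc; set (s := sqrt (b * c)).
  assert (Hs : 0 < s) by (apply sqrt_lt_R0; auto).
  assert (Hss : s * s = b * c) by (apply sqrt_sqrt; lra).
  exists (- s), s; split; [lra |]; intros z; rewrite is_eigenvalue2_antidiag.
  destruct z as [x y]; unfold RtoC; simpl; split.
  - intros [H1 H2]; destruct (Rmult_integral _ _ H2) as [Hx | Hy]; subst; [nra |].
    assert (Hroots : (x - s) * (x + s) = 0) by nra.
    destruct (Rmult_integral _ _ Hroots); [right | left]; f_equal; lra.
  - intros [E | E]; injection E as -> ->; split; nra.
Qed.

Lemma antidiag_eigenvalues_imaginary b c : b * c < 0 ->
  exists w, 0 < w /\
    forall z, is_eigenvalue2 0 b c 0 z <-> z = (0, w) \/ z = (0, - w).
Proof.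
  intros Hbc; set (s := sqrt (- (b * c))).
  assert (Hs : 0 < s) by (apply sqrt_lt_R0; lra).
  assert (Hss : s * s = - (b * c)) by (apply sqrt_sqrt; lra).
  exists s; split; [lra |]; intros z; rewrite is_eigenvalue2_antidiag.
  destruct z as [x y]; simpl; split.
  - intros [H1 H2]; destruct (Rmult_integral _ _ H2) as [Hx | Hy]; subst; [| nra].
    assert (Hroots : (y - s) * (y + s) = 0) by nra.
    destruct (Rmult_integral _ _ Hroots); [left | right]; f_equal; lra.
  - intros [E | E]; injection E as -> ->; split; nra.
Qed.

Lemma lin_eigenvalue_equilibrium V Go l r psi : 0 < V -> 0 < Go -> 0 < l -> 0 < r ->
  cos psi = 0 -> r * exp (- r / l) = rho V Go ->
  exists b c, b * c = V * V * (r - l) / (r * r * l) /\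
    forall z, lin_eigenvalue V Go l r psi z <-> is_eigenvalue2 0 b c 0 z.
Proof.
  intros HV HG Hl Hr Hc He; pose proof (rho_pos V Go HV HG).
  exists (V * sin psi), ((r - l) / (r * r * l) * V * sin psi); split.
  - pose proof (sin_sqr_of_cos_0 _ Hc) as Hs.
    replace (V * V * (r - l) / (r * r * l)) with (V * V * (r - l) / (r * r * l) * (sin psi * sin psi))
      by (rewrite Hs; ring).
    field; lra.
  - intros z; unfold lin_eigenvalue, jac11, jac12, fr, fpsi.
    rewrite Derive_const.
    replace (Derive (fun y => - V * cos y) psi) with (V * sin psi)
      by (symmetry; apply is_derive_unique; auto_derive; auto; ring).
    replace (Derive (fun x => (1 / x - 1 / rho V Go * exp (- x / l)) * V * sin psi) r)
      with ((r - l) / (r * r * l) * V * sin psi).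
    2: { symmetry; apply is_derive_unique; auto_derive; [lra |].
         change (- r * / l) with (- r / l); rewrite <- He.
         pose proof (exp_pos (- r / l)); field; repeat split; lra. }
    replace (Derive (fun y => (1 / r - 1 / rho V Go * exp (- r / l)) * V * sin y) psi) with 0.
    2: { symmetry; apply is_derive_unique; auto_derive; auto; rewrite Hc; ring. }
    reflexivity.
Qed.

Lemma saddle_type_beyond V Go l r psi : 0 < V -> 0 < Go -> 0 < l -> l < r ->
  cos psi = 0 -> r * exp (- r / l) = rho V Go -> saddle_type V Go l r psi.
Proof.
  intros HV HG Hl Hlr Hc He.
  destruct (lin_eigenvalue_equilibrium V Go l r psi) as [b [c [Hbc Hz]]]; auto; try lra.
  destruct (antidiag_eigenvalues_real b c) as [a [a' [Ha Hz']]].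
  - rewrite Hbc; apply Rdiv_lt_0_compat; [apply Rmult_lt_0_compat; nra |].
    apply Rmult_lt_0_compat; nra.
  - exists a, a'; split; auto; intros z; rewrite Hz; apply Hz'.
Qed.

Lemma center_type_within V Go l r psi : 0 < V -> 0 < Go -> 0 < r -> r < l ->
  cos psi = 0 -> r * exp (- r / l) = rho V Go -> center_type V Go l r psi.
Proof.
  intros HV HG Hr Hrl Hc He.
  destruct (lin_eigenvalue_equilibrium V Go l r psi) as [b [c [Hbc Hz]]]; auto; try lra.
  destruct (antidiag_eigenvalues_imaginary b c) as [w [Hw Hz']].
  - rewrite Hbc; unfold Rdiv.
    assert (0 < / (r * r * l)) by (apply Rinv_0_lt_compat, Rmult_lt_0_compat; nra).
    assert (0 < V * V) by nra; assert (V * V * (r - l) < 0) by nra.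
    nra.
  - exists w; split; auto; intros z; rewrite Hz; apply Hz'.
Qed.

Theorem mainTheorem2 (V Go l : R) (hV : 0 < V) (hG : 0 < Go) (hl : 0 < l) :
  let rs  := - l * LambertWm1 (- rho V Go / l) in
  let rss := - l * LambertW0 (- rho V Go / l) in
  (l > rho V Go * exp 1 ->
     0 < rs /\ 0 < rss /\ rs <> rss /\
     (forall r psi, - PI < psi <= PI ->
        (is_equilibrium V Go l r psi <->
         ((r = rs \/ r = rss) /\ (psi = PI / 2 \/ psi = - (PI / 2))))) /\
     saddle_type V Go l rs (PI / 2) /\ saddle_type V Go l rs (- (PI / 2)) /\
     center_type V Go l rss (PI / 2) /\ center_type V Go l rss (- (PI / 2))) /\
  (l < rho V Go * exp 1 -> forall r psi, ~ is_equilibrium V Go l r psi).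
Proof.
  intros rs rss; pose proof (rho_pos V Go hV hG) as Hrho.
  split.
  - intros Hgt; pose proof (Lambert_domain l (rho V Go) hl Hrho Hgt) as Hy.
    pose proof (LambertWm1_lt_m1 _ Hy); pose proof (LambertW0_bounds _ Hy).
    assert (Hrs : l < rs) by (unfold rs; nra).
    assert (Hrss : 0 < rss < l) by (unfold rss; split; nra).
    assert (Ers : rs * exp (- rs / l) = rho V Go) by (apply rexp_eq_iff_Lambert; auto).
    assert (Erss : rss * exp (- rss / l) = rho V Go) by (apply rexp_eq_iff_Lambert; auto).
    assert (Hc1 : cos (PI / 2) = 0) by apply cos_PI2.
    assert (Hc2 : cos (- (PI / 2)) = 0) by (rewrite cos_neg; apply cos_PI2).
    refine (conj _ (conj _ (conj _ (conj _ (conj _ (conj _ (conj _ _))))))).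
    1-3: lra.
    1: { intros r psi Hpsi.
         rewrite is_equilibrium_iff, <- cos_eq_0_iff, rexp_eq_iff_Lambert by auto.
         fold rs rss; intuition (subst; lra). }
    1, 2: apply saddle_type_beyond; auto.
    1, 2: apply center_type_within; auto; lra.
  - intros Hlt r psi Heq; apply is_equilibrium_iff in Heq as [_ [_ He]]; auto.
    pose proof (rexp_le l r hl) as Hle; rewrite He in Hle.
    pose proof exp_m1_mul_exp_1.
    pose proof (exp_pos 1); nra.
Qed.
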